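(* Let $1\le d<n$ be integers and $X=P(d,n)$. Then there exists a family $\mathcal{F}_X$ of functions $\phi:V(X)\to\{-1,0,1\}$ such that: (i) for every $\phi\in\mathcal{F}_X$, both $-1$ and $1$ lie in the image of $\phi$; (ii) for every $\phi\in\mathcal{F}_X$ and every maximal clique $K$ of $X$, $\sum_{v\in V(K)}\phi(v)=0$; (iii) viewing each $\phi$ as a vector in $\mathbb{R}^{V(X)}$, $\mathcal{F}_X$ contains a linearly independent subset of cardinality $\binom{n-1}{d}$.
   Context: For integers $1\le d\le n$, let $S_{d,n}$ be the set of all $d$-tuples with entries in $[n]=\{1,\dots,n\}$ and pairwise distinct entries. The partial permutation graph $P(d,n)$ has vertex set $S_{d,n}$, two $d$-tuples being adjacent if and only if they differ in exactly one coordinate. *)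

From HB Require Import structures.
From mathcomp Require Import all_boot all_order all_algebra.
Set Implicit Arguments. Unset Strict Implicit. Unset Printing Implicit Defensive.
Import Order.TTheory GRing.Theory Num.Theory.

(* Vertex set S_{d,n}: d-tuples over [n] (encoded as 'I_n = {0..n-1})
   with pairwise distinct entries. *)
Definition ppvert (d n : nat) : finType := {t : d.-tuple 'I_n | uniq t}.

Definition pp_adj (d n : nat) (x y : ppvert d n) : bool :=
  #|[pred i : 'I_d | tnth (val x) i != tnth (val y) i]| == 1%N.

Definition pp_clique (d n : nat) (K : {set ppvert d n}) : bool :=
  [forall x in K, forall y in K, (x != y) ==> pp_adj x y].

Definition pp_maxclique (d n : nat) (K : {set ppvert d n}) : bool :=
  maxset (@pp_clique d n) K.

Definition lin_indep (R : fieldType) (V : finType) (S : seq {ffun V -> int}) : Prop :=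
  uniq S /\
  forall c : {ffun V -> int} -> R,
    (forall v : V, (\sum_(phi <- S) c phi * (phi v)%:~R)%R = 0%R) ->
    forall phi, phi \in S -> c phi = 0%R.

From HB Require Import structures.
From mathcomp Require Import all_boot all_order all_algebra all_fingroup.
Import Order.TTheory GRing.Theory Num.Theory.
Set Implicit Arguments. Unset Strict Implicit. Unset Printing Implicit Defensive.

(* 1. Geometry of P(d,n): for 1 <= d < n the maximal cliques are exactly the
      "lines" [line x i], i.e. the vertices agreeing with x off coordinate i.
   2. For a (d+1)-set T of symbols and a vertex x all of whose entries lie in
      T, let m be the unique symbol of T missing from x; [vdm_sign T x] is the
      sign of the Vandermonde determinant of (x_1, ..., x_d, m), and 0 when x
      is not contained in T.  Replacing x_i by m transposes two rows of the
      matrix, so the sign flips.  A line meets the support of [vdm_sign T] in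
      at most these two vertices, hence every line sum vanishes.
   3. Fixing the last symbol n-1 and letting U range over the d-subsets of
      {0, ..., n-2}, the functions [vdm_sign (n-1 |: U)] form a diagonal
      system: a vertex enumerating U lies in the support of the U-function
      only.  They are therefore linearly independent, and there are
      'C(n-1, d) of them. *)

Section Vertices.
Variables d n : nat.
Implicit Types x y z : ppvert d n.

Lemma ppvert_eq x y : (forall i, tnth (val x) i = tnth (val y) i) -> x = y.
Proof. by move=> h; apply: val_inj; apply: eq_from_tnth. Qed.

Lemma card_ppvert x : #|val x| = d.
Proof. by have /card_uniqP -> := valP x; rewrite size_tuple. Qed.

Lemma ppvert_on (U : {set 'I_n}) : #|U| = d ->
  exists x : ppvert d n, forall a, (a \in val x) = (a \in U).
Proof.
move=> cardU; have sz : size (enum U) == d by rewrite -cardE cardU.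
exists (exist (fun t : d.-tuple 'I_n => uniq t) (Tuple sz) (enum_uniq (mem U))).
by move=> a; rewrite /= mem_enum.
Qed.

Lemma ppvert_missing x : (d < n)%N -> exists a, a \notin val x.
Proof.
move=> ltdn; have : (0 < #|[predC val x]|)%N.
  by rewrite -(ltn_add2l #|val x|) addn0 cardC card_ord card_ppvert.
by case/card_gt0P => a; rewrite inE => Ha; exists a.
Qed.

Definition replace_tuple (t : d.-tuple 'I_n) (i : 'I_d) (a : 'I_n) :=
  [tuple if j == i then a else tnth t j | j < d].

Lemma replace_tuple_uniq (t : d.-tuple 'I_n) i a :
  uniq t -> a \notin t -> uniq (replace_tuple t i a).
Proof.
move=> /tuple_uniqP ut at0; apply/tuple_uniqP => j1 j2; rewrite !tnth_mktuple.
case: eqP => [->|_]; case: eqP => [->|_] //; last exact: ut.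
- by move=> e; move: at0; rewrite e mem_tnth.
- by move=> e; move: at0; rewrite -e mem_tnth.
Qed.

Definition replace x (i : 'I_d) (a : 'I_n) (ax : a \notin val x) : ppvert d n :=
  exist (fun t : d.-tuple 'I_n => uniq t) (replace_tuple (val x) i a)
        (replace_tuple_uniq i (valP x) ax).

Lemma tnth_replace x i a (ax : a \notin val x) j :
  tnth (val (replace i ax)) j = if j == i then a else tnth (val x) j.
Proof. exact: tnth_mktuple. Qed.

Lemma replace_neq x i a (ax : a \notin val x) : replace i ax != x.
Proof.
apply/eqP => e; have := tnth_replace i ax i; rewrite e eqxx => xia.
by apply: (negP ax); rewrite -xia mem_tnth.
Qed.

Definition line x (i : 'I_d) : {set ppvert d n} :=
  [set y | [forall k, (k != i) ==> (tnth (val y) k == tnth (val x) k)]].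

Lemma lineP x i y :
  reflect (forall k, k != i -> tnth (val y) k = tnth (val x) k) (y \in line x i).
Proof.
rewrite inE; apply: (iffP forallP) => [h k ki | h k].
  exact/eqP/(implyP (h k)).
by apply/implyP => ki; rewrite h.
Qed.

Lemma line_id x i : x \in line x i.
Proof. exact/lineP. Qed.

Lemma line_replace x i a (ax : a \notin val x) : replace i ax \in line x i.
Proof. by apply/lineP => k ki; rewrite tnth_replace (negbTE ki). Qed.

Lemma line_shift x y i : y \in line x i -> line y i = line x i.
Proof.
by move=> /lineP yx; apply/setP => z; apply/lineP/lineP => zy k ki;
  rewrite zy // yx.
Qed.

Definition differ_at x y (i : 'I_d) :=
  tnth (val x) i != tnth (val y) i /\
  forall k, k != i -> tnth (val x) k = tnth (val y) k.

Lemma adjP x y : pp_adj x y -> exists i, differ_at x y i.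
Proof.
rewrite /pp_adj -cardsE => /cards1P [i Hi]; exists i; split.
  by have := set11 i; rewrite -Hi inE.
move=> k ki; apply/eqP; apply: contraNT ki => hk.
have : k \in [set j in [pred j | tnth (val x) j != tnth (val y) j]] by rewrite inE.
by rewrite Hi inE.
Qed.

Lemma differ_at_line x y i : differ_at x y i -> y \in line x i.
Proof. by case=> _ h; apply/lineP => k ki; rewrite h. Qed.

Lemma adj_same_direction x y z i j :
  differ_at x y i -> differ_at x z j -> pp_adj y z -> j = i.
Proof.
move=> [xyi xy] [xzj xz] /adjP [l [_ yz]].
apply/eqP; apply: contraT => ji.
have li : l = i.
  apply/eqP; apply: contraNT xyi => li.
  by rewrite (xz i) 1?eq_sym // (yz i) // eq_sym.
have lj : l = j.
  apply/eqP; apply: contraNT xzj => lj.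
  by rewrite (xy j) // (yz j) // eq_sym.
by move: ji; rewrite -li -lj eqxx.
Qed.

(* Two distinct points of a line differ exactly in its direction. *)
Lemma line_clique x i : pp_clique (line x i).
Proof.
apply/forallP => y; apply/implyP => /lineP yx.
apply/forallP => z; apply/implyP => /lineP zx; apply/implyP => yz.
rewrite /pp_adj -(card1 i); apply/eqP/eq_card => k; rewrite !inE.
have [-> | ki] := eqVneq k i; last by rewrite yx // zx // eqxx.
apply: contra yz => /eqP yzi; apply/eqP/ppvert_eq => l.
by have [-> //| li] := eqVneq l i; rewrite yx // zx.
Qed.

Lemma clique_adj (K : {set ppvert d n}) x y :
  pp_clique K -> x \in K -> y \in K -> x != y -> pp_adj x y.
Proof.
move=> /forallP/(_ x)/implyP cK xK yK.
by move: (cK xK) => /forallP/(_ y)/implyP/(_ yK)/implyP.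
Qed.

(* Every maximal clique through x is a line through x: it contains a second
   vertex y (a singleton lies in a larger line), and every other member must
   differ from x in the same direction as y. *)
Lemma maxclique_line (K : {set ppvert d n}) x : (0 < d)%N -> (d < n)%N ->
  pp_maxclique K -> x \in K -> exists i, K = line x i.
Proof.
move=> d_gt0 ltdn /maxsetP [cK maxK] xK.
have [y yK yx] : exists2 y, y \in K & y != x.
  apply/exists_inP; apply: contraT; rewrite negb_exists_in => /forall_inP Kx.
  have [a ax] := ppvert_missing x ltdn.
  pose i0 : 'I_d := Ordinal d_gt0.
  have Kline : line x i0 = K.
    apply: maxK (line_clique x i0) _; apply/subsetP => z zK.
    by move: (Kx z zK); rewrite negbK => /eqP ->; apply: line_id.
  by move: (Kx (replace i0 ax)); rewrite -Kline line_replace replace_neq => /(_ isT).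
rewrite eq_sym in yx.
have [i xyi] := adjP (clique_adj cK xK yK yx).
exists i; apply/esym/maxK; first exact: line_clique.
apply/subsetP => z zK; have [-> | zx] := eqVneq z x; first exact: line_id.
have [-> | zy] := eqVneq z y; first exact: differ_at_line.
rewrite eq_sym in zx; rewrite eq_sym in zy.
have [j xzj] := adjP (clique_adj cK xK zK zx).
rewrite -(adj_same_direction xyi xzj (clique_adj cK yK zK zy)).
exact: differ_at_line.
Qed.

End Vertices.

Section VandermondeSign.
Local Open Scope ring_scope.
Variables d n : nat.
Variable T : {set 'I_n}.
Hypothesis cardT : #|T| = d.+1.
Implicit Types x u v : ppvert d n.

(* x uses only symbols of T; then exactly one symbol of T is missing from x. *)
Definition inside x := [forall k, tnth (val x) k \in T].
Definition missing x := [pick a in T | a \notin val x].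

(* The d+1 nodes (x_1, ..., x_d, m) of the Vandermonde matrix, m missing. *)
Definition node x (k : 'I_d.+1) : int :=
  match unlift ord_max k with
  | Some j => (tnth (val x) j : nat)%:Z
  | None => if missing x is Some a then (a : nat)%:Z else 0
  end.

Definition vdm x : 'M[int]_d.+1 := \matrix_(k, j) (node x k ^+ j).

Definition vdm_sign x : int := if inside x then sgz (\det (vdm x)) else 0.

Lemma vdm_sign_values x : vdm_sign x \in [:: -1; 0; 1].
Proof. by rewrite /vdm_sign /sgz; case: ifP => //; case: ifP => //; case: ifP. Qed.

(* Counting: T has d+1 symbols and x uses d of them, so exactly one is
   missing from x. *)
Lemma card_missing x : inside x -> #|T :\: [set a in val x]| = 1%N.
Proof.
move=> /forallP xT; have xsubT : [set a in val x] \subset T.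
  by apply/subsetP => a; rewrite inE => /tnthP [k ->].
by rewrite cardsD (setIidPr xsubT) cardsE card_ppvert cardT subSnn.
Qed.

Lemma missing_exists x : inside x -> exists2 m, m \in T & m \notin val x.
Proof.
move=> /card_missing/eqP/cards1P [m Tx]; have := set11 m; rewrite -Tx !inE.
by case/andP=> mx mT; exists m.
Qed.

Lemma missing_uniq x a b : inside x -> a \in T -> a \notin val x ->
  b \in T -> b \notin val x -> a = b.
Proof.
move=> /card_missing/eqP/cards1P [m Tx] aT ax bT bx.
have inTx c : c \in T -> c \notin val x -> c = m.
  by move=> cT cx; apply/set1P; rewrite -Tx !inE cT cx.
by rewrite (inTx a) // (inTx b).
Qed.

Lemma missingP x m : inside x -> m \in T -> m \notin val x -> missing x = Some m.
Proof.
move=> xT mT mx; rewrite /missing; case: pickP => [b /andP [bT bx] | none].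
  by rewrite (missing_uniq xT bT bx mT mx).
by have := none m; rewrite mT mx.
Qed.

Lemma node_inj x : inside x -> injective (node x).
Proof.
move=> xT k1 k2; have [m mT mx] := missing_exists xT.
rewrite /node (missingP xT mT mx).
have symbol_inj (a b : 'I_n) : (a : nat)%:Z = (b : nat)%:Z -> a = b.
  by move/eqP; rewrite eqz_nat => /eqP /ord_inj.
case: unliftP => [j1 ->|->]; case: unliftP => [j2 ->|->] // /symbol_inj e.
- by rewrite (tuple_uniqP _ (valP x) j1 j2).
- by move: mx; rewrite -e mem_tnth.
- by move: mx; rewrite e mem_tnth.
Qed.

(* Distinct nodes make the Vandermonde determinant nonzero, so the support
   of vdm_sign is exactly the set of vertices inside T. *)
Lemma vdm_sign_eq0 x : (vdm_sign x == 0) = ~~ inside x.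
Proof.
rewrite /vdm_sign; case: ifP => [xT|]; last by rewrite eqxx.
rewrite sgz_eq0 /=; have -> : vdm x = (Vandermonde d.+1 (\row_k node x k))^T.
  by apply/matrixP => i j; rewrite !mxE.
rewrite det_tr det_Vandermonde; apply/negbTE/prodf_neq0 => i _.
apply/prodf_neq0 => j ij; rewrite !mxE subr_eq0.
by apply: contraTneq ij => /(node_inj xT) ->; rewrite ltnn.
Qed.

Lemma inside_replace x i m (mx : m \notin val x) :
  inside x -> m \in T -> inside (replace i mx).
Proof.
move=> /forallP xT mT; apply/forallP => k.
by rewrite tnth_replace; case: eqP.
Qed.

(* Replacing x_i by the missing symbol swaps two nodes, negating the sign. *)
Lemma vdm_sign_replace x i m (mx : m \notin val x) :
  inside x -> m \in T -> vdm_sign (replace i mx) = - vdm_sign x.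
Proof.
move=> xT mT; set w := replace i mx; have wT := inside_replace i mx xT mT.
have wm : missing w = Some (tnth (val x) i).
  apply: missingP => //; first by move/forallP: xT.
  apply/negP => /tnthP [k]; rewrite tnth_replace.
  case: eqP => [_ e|/eqP ki /(tuple_uniqP _ (valP x)) e].
    by apply: (negP mx); rewrite -e mem_tnth.
  by rewrite e eqxx in ki.
pose s := tperm (lift ord_max i) ord_max.
have node_w k : node w k = node x (s k).
  rewrite /node wm (missingP xT mT mx); case: (unliftP ord_max k) => [j ->|->].
    rewrite tnth_replace; have [->|ji] := eqVneq j i.
      by rewrite tpermL unlift_none.
    rewrite tpermD ?liftK // ?neq_lift //.
    by apply: contra ji => /eqP /lift_inj ->.
  by rewrite tpermR liftK.
have vdm_w : vdm w = row_perm s (vdm x).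
  by apply/matrixP => k j; rewrite !mxE node_w.
rewrite /vdm_sign xT wT vdm_w row_permE det_mulmx det_perm odd_tperm.
by rewrite eq_sym neq_lift expr1 mulN1r sgzN.
Qed.

Lemma line_inside u v i m (mu : m \notin val u) : m \in T -> inside u ->
  inside v -> v \in line u i -> v != u -> v = replace i mu.
Proof.
move=> mT uT vT /lineP vu vnu.
have vim : tnth (val v) i = m.
  apply: (missing_uniq uT) mT mu; first by move/forallP: vT.
  apply/negP => /tnthP [k]; have [-> viu|ki] := eqVneq k i.
    by case/eqP: vnu; apply: ppvert_eq => l; have [->|/vu] := eqVneq l i.
  by rewrite -vu // => /(tuple_uniqP _ (valP v)) e; rewrite e eqxx in ki.
by apply: ppvert_eq => k; rewrite tnth_replace; case: eqP => [->|/eqP /vu].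
Qed.

Lemma line_sum x i : \sum_(v in line x i) vdm_sign v = 0.
Proof.
have [/existsP [u /andP [ux]] | none] :=
  boolP [exists u, (u \in line x i) && (vdm_sign u != 0)]; last first.
  apply: big1 => v vx; apply/eqP; apply: contraNT none => v0.
  by apply/existsP; exists v; rewrite vx.
rewrite vdm_sign_eq0 negbK => uT.
have [m mT mu] := missing_exists uT.
have lineE := line_shift ux; set w := replace i mu.
have wx : w \in line x i by rewrite -lineE line_replace.
rewrite (bigD1 u) //= (bigD1 w) /=; last by rewrite wx replace_neq.
rewrite big1 ?addr0 ?vdm_sign_replace ?addrN // => v /andP [/andP [vx vu] vw].
apply/eqP; rewrite vdm_sign_eq0; apply: contra vw => vT.
by rewrite -lineE in vx; rewrite (line_inside mu mT uT vT vx vu).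
Qed.

Lemma maxclique_sum (K : {set ppvert d n}) : (0 < d)%N -> (d < n)%N ->
  pp_maxclique K -> \sum_(v in K) vdm_sign v = 0.
Proof.
move=> d_gt0 ltdn maxK.
have [-> | /set0Pn [x xK]] := eqVneq K set0; first by rewrite big_set0.
by have [i ->] := maxclique_line d_gt0 ltdn maxK xK; apply: line_sum.
Qed.

Lemma vdm_sign_both x : (0 < d)%N -> inside x ->
  (exists v, vdm_sign v = -1) /\ (exists v, vdm_sign v = 1).
Proof.
move=> d_gt0 xT; have [m mT mx] := missing_exists xT.
set w := replace (Ordinal d_gt0) mx; have flip : vdm_sign w = - vdm_sign x.
  exact: vdm_sign_replace.
have x0 : vdm_sign x != 0 by rewrite vdm_sign_eq0 xT.
have := vdm_sign_values x; rewrite !inE => /or3P [] /eqP sx.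
- by split; [exists x | exists w; rewrite flip sx opprK].
- by rewrite sx eqxx in x0.
- by split; [exists w; rewrite flip sx | exists x].
Qed.

End VandermondeSign.

Lemma lin_indep_diag (R : numFieldType) (V : finType) (S : seq {ffun V -> int}) :
  uniq S ->
  (forall phi, phi \in S -> exists v, phi v != 0%R /\
     forall psi, psi \in S -> psi != phi -> psi v = 0%R) ->
  lin_indep R S.
Proof.
move=> uS diagS; split=> // c comb0 phi phiS.
have [v [phiv0 others0]] := diagS phi phiS.
have := comb0 v; rewrite (bigD1_seq phi) //= big1_seq ?addr0.
  by move/eqP; rewrite mulf_eq0 intr_eq0 (negbTE phiv0) orbF => /eqP.
by move=> psi /andP [psiphi psiS]; rewrite others0 // mulr0z mulr0.
Qed.

Section Family.
Variables d n : nat.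

(* The d-subsets U of {0, ..., n-1}, each completed by the symbol n. *)
Definition base_sets : seq {set 'I_n.+1} :=
  enum [set U : {set 'I_n.+1} | U \subset [set~ ord_max] & #|U| == d].

Definition base_fun (U : {set 'I_n.+1}) : {ffun ppvert d n.+1 -> int} :=
  [ffun x => vdm_sign (ord_max |: U) x].

Lemma size_base_sets : size base_sets = 'C(n, d).
Proof. by rewrite -cardE cards_draws cardsC1 card_ord. Qed.

Lemma base_setsP U : U \in base_sets -> #|U| = d /\ ord_max \notin U.
Proof.
rewrite mem_enum inE => /andP [/subsetP Umax /eqP cardU]; split=> //.
by apply/negP => /Umax; rewrite !inE eqxx.
Qed.

Lemma base_vertex U : U \in base_sets ->
  exists x : ppvert d n.+1, forall a, (a \in val x) = (a \in U).
Proof. by case/base_setsP=> cardU _; apply: ppvert_on. Qed.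

Lemma card_base_set U : U \in base_sets -> #|ord_max |: U| = d.+1.
Proof. by case/base_setsP=> cardU maxU; rewrite cardsU1 maxU cardU. Qed.

Lemma inside_base U U' (x : ppvert d n.+1) : U \in base_sets ->
  U' \in base_sets -> (forall a, (a \in val x) = (a \in U)) ->
  inside (ord_max |: U') x = (U' == U).
Proof.
move=> /base_setsP [cardU maxU] /base_setsP [cardU' _] xU.
rewrite eq_sym eqEcard cardU cardU' leqnn andbT.
apply/forallP/subsetP => [xU' a aU | UU' k].
  have : a \in val x by rewrite xU.
  case/tnthP => k ak; have := xU' k; rewrite -ak in_setU1.
  by case/orP => // /eqP amax; rewrite -amax aU in maxU.
by rewrite in_setU1 UU' ?orbT // -xU mem_tnth.
Qed.

Lemma base_fun_diag U U' (x : ppvert d n.+1) : U \in base_sets ->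
  U' \in base_sets -> (forall a, (a \in val x) = (a \in U)) ->
  (base_fun U' x != 0%R) = (U' == U).
Proof.
move=> UB U'B xU.
by rewrite ffunE vdm_sign_eq0 ?card_base_set // negbK (inside_base UB U'B xU).
Qed.

Lemma base_funs_indep (R : numFieldType) :
  lin_indep R [seq base_fun U | U <- base_sets].
Proof.
apply: lin_indep_diag.
  rewrite map_inj_in_uniq ?enum_uniq // => U U' UB U'B eqUU'.
  have [x xU] := base_vertex UB; apply/esym/eqP.
  by rewrite -(base_fun_diag UB U'B xU) -eqUU' (base_fun_diag UB UB xU).
move=> _ /mapP [U UB ->]; have [x xU] := base_vertex UB.
exists x; split; first by rewrite (base_fun_diag UB UB xU).
move=> _ /mapP [U' U'B ->] neqU; apply/eqP; rewrite -[_ == _]negbK.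
by rewrite (base_fun_diag UB U'B xU); apply: contraNneq neqU => ->.
Qed.

End Family.

Theorem mainTheorem5 (R : realFieldType) (d n : nat) (hd : (1 <= d)%N) (hdn : (d < n)%N) :
  exists F : seq {ffun ppvert d n -> int},
    [/\ (forall phi, phi \in F -> forall v, phi v \in [:: (-1)%R; 0%R; 1%R]),
        (forall phi, phi \in F ->
           (exists v, phi v = (-1)%R) /\ (exists v, phi v = 1%R)),
        (forall phi, phi \in F -> forall K : {set ppvert d n},
           pp_maxclique K -> (\sum_(v in K) phi v)%R = 0%R) &
        (exists S : seq {ffun ppvert d n -> int},
           {subset S <= F} /\ size S = 'C(n.-1, d) /\ lin_indep R S)].
Proof.
case: n hdn => [//|n] hdn.
exists [seq base_fun d U | U <- base_sets d n]; split.
- by move=> _ /mapP [U _ ->] v; rewrite ffunE; apply: vdm_sign_values.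
- move=> _ /mapP [U UB ->]; have [x xU] := base_vertex UB.
  have xT : inside (ord_max |: U) x by rewrite (inside_base UB UB xU).
  have [[v vm] [w wp]] := vdm_sign_both (card_base_set UB) hd xT.
  by split; [exists v | exists w]; rewrite ffunE.
- move=> _ /mapP [U UB ->] K maxK; under eq_bigr do rewrite ffunE.
  exact: (maxclique_sum (card_base_set UB) hd hdn maxK).
exists [seq base_fun d U | U <- base_sets d n]; split=> //; split.
  by rewrite size_map size_base_sets.
exact: base_funs_indep.
Qed.
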